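(* Let $\mathcal B$ be an extriangulated category with enough injectives. If a subcategory $\mathcal C$ is rigid, closed under direct summands and fully contravariantly finite, then $(\mathcal C,\mathcal C^{\perp_1})$ is a cotorsion pair.
   Context: $(\mathcal B,\mathbb E,\mathfrak s)$ is an extriangulated category (Nakaoka–Palu); conflations $A\rightarrowtail B\twoheadrightarrow C$. Subcategories are full, additive, closed under isomorphisms and finite direct sums. $\mathcal C^{\perp_1}=\{B\mid \mathbb E(\mathcal C,B)=0\}$; $\mathcal C$ is rigid if $\mathbb E(\mathcal C,\mathcal C)=0$. $\mathcal C$ is fully contravariantly finite if every object admits a right $\mathcal C$-approximation which is a deflation. A cotorsion pair $(\mathcal U,\mathcal V)$ is a pair of subcategories closed under direct summands with $\mathbb E(\mathcal U,\mathcal V)=0$ such that every $B$ admits conflations $V_B\rightarrowtail U_B\twoheadrightarrow B$ and $B\rightarrowtail V^B\twoheadrightarrow U^B$ with $U_B,U^B\in\mathcal U$, $V_B,V^B\in\mathcal V$. *)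

From mathcomp Require Import all_boot all_algebra.
Set Implicit Arguments.
Unset Strict Implicit.
Unset Printing Implicit Defensive.
Import GRing.Theory.
Local Open Scope ring_scope.

(* ---------- Preadditive category data (composition is diagrammatic:
   [cmp f g] is "first f, then g", i.e. g o f). ---------- *)
Record CatData := {
  Obj :> Type;
  Hom : Obj -> Obj -> zmodType;
  cmp : forall A B C : Obj, Hom A B -> Hom B C -> Hom A C;
  idm : forall A : Obj, Hom A A;
  zobj : Obj;
  bp  : Obj -> Obj -> Obj;
  bi1 : forall A B : Obj, Hom A (bp A B);
  bi2 : forall A B : Obj, Hom B (bp A B);
  bp1 : forall A B : Obj, Hom (bp A B) A;
  bp2 : forall A B : Obj, Hom (bp A B) B
}.

Arguments Hom {c}.
Arguments cmp {c A B C}.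
Arguments idm {c}.
Arguments zobj {c}.
Arguments bp {c}.
Arguments bi1 {c}.
Arguments bi2 {c}.
Arguments bp1 {c}.
Arguments bp2 {c}.

Definition is_additive (X : CatData) : Prop :=
  (forall (A B C D : X) (f : Hom A B) (g : Hom B C) (h : Hom C D),
         cmp f (cmp g h) = cmp (cmp f g) h) /\
  (forall (A B : X) (f : Hom A B), cmp (idm A) f = f) /\
  (forall (A B : X) (f : Hom A B), cmp f (idm B) = f) /\
  (forall (A B C : X) (f f' : Hom A B) (g : Hom B C),
         cmp (f + f') g = cmp f g + cmp f' g) /\
  (forall (A B C : X) (f : Hom A B) (g g' : Hom B C),
         cmp f (g + g') = cmp f g + cmp f g') /\
  idm (@zobj X) = 0 /\
  (forall A B : X,
        [/\ cmp (bi1 A B) (bp1 A B) = idm A,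
            cmp (bi2 A B) (bp2 A B) = idm B,
            cmp (bi1 A B) (bp2 A B) = 0,
            cmp (bi2 A B) (bp1 A B) = 0 &
            cmp (bp1 A B) (bi1 A B) + cmp (bp2 A B) (bi2 A B) = idm (bp A B)]).

Definition is_iso {X : CatData} {A B : X} (f : Hom A B) : Prop :=
  exists g : Hom B A, cmp f g = idm A /\ cmp g f = idm B.

Definition isomorphic {X : CatData} (A B : X) : Prop :=
  exists f : Hom A B, is_iso f.

Definition summap {X : CatData} {A A' B B' : X} (x : Hom A B) (x' : Hom A' B')
  : Hom (bp A A') (bp B B') :=
  cmp (cmp (bp1 A A') x) (bi1 B B') + cmp (cmp (bp2 A A') x') (bi2 B B').

(* ---------- Extriangulated data: the bifunctor E and the realization s.
   [Ext C A] is E(C,A); [pf a d] is a_* d; [pb c d] is c^* d;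
   [real d x y] means that  A -x-> B -y-> C  belongs to the class s(d). *)
Record ExtriData (X : CatData) := {
  Ext : X -> X -> zmodType;
  pf : forall C A A' : X, Hom A A' -> Ext C A -> Ext C A';
  pb : forall C' C A : X, Hom C' C -> Ext C A -> Ext C' A;
  real : forall A B C : X, Ext C A -> Hom A B -> Hom B C -> Prop
}.

Arguments Ext {X} e.
Arguments pf {X} e {C A A'}.
Arguments pb {X} e {C' C A}.
Arguments real {X} e {A B C}.

Definition extsum {X : CatData} (D : ExtriData X) {A A' C C' : X}
  (d : Ext D C A) (d' : Ext D C' A') : Ext D (bp C C') (bp A A') :=
  pf D (bi1 A A') (pb D (bp1 C C') d) + pf D (bi2 A A') (pb D (bp2 C C') d').

Definition is_extriangulated {X : CatData} (D : ExtriData X) : Prop :=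
  [/\
  ((forall (C A A' : X) (a : Hom A A') (d d' : Ext D C A),
         pf D a (d + d') = pf D a d + pf D a d') /\
      (forall (C A A' : X) (a a' : Hom A A') (d : Ext D C A),
         pf D (a + a') d = pf D a d + pf D a' d) /\
      (forall (C A : X) (d : Ext D C A), pf D (idm A) d = d) /\
      (forall (C A A' A'' : X) (a : Hom A A') (a' : Hom A' A'') (d : Ext D C A),
         pf D (cmp a a') d = pf D a' (pf D a d)) /\
      (forall (C' C A : X) (c : Hom C' C) (d d' : Ext D C A),
         pb D c (d + d') = pb D c d + pb D c d') /\
      (forall (C' C A : X) (c c' : Hom C' C) (d : Ext D C A),
         pb D (c + c') d = pb D c d + pb D c' d) /\
      (forall (C A : X) (d : Ext D C A), pb D (idm C) d = d) /\
      (forall (C'' C' C A : X) (c' : Hom C'' C') (c : Hom C' C) (d : Ext D C A),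
         pb D (cmp c' c) d = pb D c' (pb D c d)) /\
      (forall (C' C A A' : X) (c : Hom C' C) (a : Hom A A') (d : Ext D C A),
         pf D a (pb D c d) = pb D c (pf D a d))),
  (* s is a realization: each s(d) is a nonempty equivalence class of
     sequences, and morphisms of extensions are realized *)
  [/\ (forall (A C : X) (d : Ext D C A),
         exists (B : X) (x : Hom A B) (y : Hom B C), real D d x y),
      (forall (A B B' C : X) (d : Ext D C A) (x : Hom A B) (y : Hom B C)
              (x' : Hom A B') (y' : Hom B' C),
         real D d x y ->
         (real D d x' y' <->
          exists b : Hom B B', [/\ is_iso b, cmp x b = x' & cmp b y' = y])) &
      (forall (A B C A' B' C' : X) (d : Ext D C A) (d' : Ext D C' A')
              (x : Hom A B) (y : Hom B C) (x' : Hom A' B') (y' : Hom B' C')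
              (a : Hom A A') (c : Hom C C'),
         real D d x y -> real D d' x' y' -> pf D a d = pb D c d' ->
         exists b : Hom B B', cmp x b = cmp a x' /\ cmp b y' = cmp y c)],
  (* (ET2) additivity of the realization *)
  (forall A C : X, real D (0 : Ext D C A) (bi1 A C) (bp2 A C)) /\
  (forall (A B C A' B' C' : X) (d : Ext D C A) (d' : Ext D C' A')
          (x : Hom A B) (y : Hom B C) (x' : Hom A' B') (y' : Hom B' C'),
     real D d x y -> real D d' x' y' ->
     real D (extsum d d') (summap x x') (summap y y')),
  (* (ET3) and (ET3)^op *)
  (forall (A B C A' B' C' : X) (d : Ext D C A) (d' : Ext D C' A')
          (x : Hom A B) (y : Hom B C) (x' : Hom A' B') (y' : Hom B' C')
          (a : Hom A A') (b : Hom B B'),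
     real D d x y -> real D d' x' y' -> cmp x b = cmp a x' ->
     exists c : Hom C C', cmp b y' = cmp y c /\ pf D a d = pb D c d') /\
  (forall (A B C A' B' C' : X) (d : Ext D C A) (d' : Ext D C' A')
          (x : Hom A B) (y : Hom B C) (x' : Hom A' B') (y' : Hom B' C')
          (b : Hom B B') (c : Hom C C'),
     real D d x y -> real D d' x' y' -> cmp b y' = cmp y c ->
     exists a : Hom A A', cmp x b = cmp a x' /\ pf D a d = pb D c d') &
  (* (ET4) and (ET4)^op *)
  (forall (A B D0 C F : X) (f : Hom A B) (f' : Hom B D0) (g : Hom B C)
          (g' : Hom C F) (d : Ext D D0 A) (d' : Ext D F B),
     real D d f f' -> real D d' g g' ->
     exists (E : X) (h' : Hom C E) (dd : Hom D0 E) (e : Hom E F)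
            (d'' : Ext D E A),
       real D d'' (cmp f g) h' /\ cmp f' dd = cmp g h' /\ cmp h' e = g' /\
       real D (pf D f' d') dd e /\ pb D dd d'' = d /\ pf D f d'' = pb D e d') /\
  (forall (D0 A B F C : X) (f' : Hom D0 A) (f : Hom A B) (g' : Hom F B)
          (g : Hom B C) (d : Ext D B D0) (d' : Ext D C F),
     real D d f' f -> real D d' g' g ->
     exists (E : X) (dd : Hom D0 E) (e : Hom E F) (h' : Hom E A)
            (d'' : Ext D C E),
       real D d'' h' (cmp f g) /\ cmp dd h' = f' /\ cmp e g' = cmp h' f /\
       real D (pb D g' d) dd e /\ pf D e d'' = d' /\ pf D dd d = pb D g d'')
  ].

Section Notions.
Context {X : CatData} (D : ExtriData X).

Definition conflation {A B C : X} (x : Hom A B) (y : Hom B C) : Prop :=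
  exists d : Ext D C A, real D d x y.

Definition deflation {B C : X} (y : Hom B C) : Prop :=
  exists (A : X) (x : Hom A B), conflation x y.

Definition injective_obj (I : X) : Prop :=
  forall (A B C : X) (x : Hom A B) (y : Hom B C), conflation x y ->
  forall a : Hom A I, exists b : Hom B I, cmp x b = a.

Definition enough_injectives : Prop :=
  forall A : X, exists (I C : X) (x : Hom A I) (y : Hom I C),
    conflation x y /\ injective_obj I.

(* subcategories: given by a predicate on objects; by the standing
   convention they are full, additive (contain a zero object), closed under
   isomorphisms and finite direct sums *)
Definition subcategory (P : X -> Prop) : Prop :=
  [/\ P zobj,
      (forall A B : X, isomorphic A B -> P A -> P B) &
      (forall A B : X, P A -> P B -> P (bp A B))].

Definition closed_summands (P : X -> Prop) : Prop :=
  forall M A B : X, P M -> isomorphic M (bp A B) -> P A.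

Definition rigid (P : X -> Prop) : Prop :=
  forall C C' : X, P C -> P C' -> forall d : Ext D C C', d = 0.

Definition perp1 (P : X -> Prop) (B : X) : Prop :=
  forall C : X, P C -> forall d : Ext D C B, d = 0.

Definition fully_contravariantly_finite (P : X -> Prop) : Prop :=
  forall B : X, exists (C0 : X) (f : Hom C0 B),
    [/\ P C0, deflation f &
        forall (C' : X) (g : Hom C' B), P C' -> exists h : Hom C' C0, cmp h f = g].

Definition cotorsion_pair (U V : X -> Prop) : Prop :=
  subcategory U /\ subcategory V /\ closed_summands U /\ closed_summands V /\
      (forall A B : X, U A -> V B -> forall d : Ext D A B, d = 0) /\
      (forall B : X, exists (VB UB : X) (x : Hom VB UB) (y : Hom UB B),
          [/\ V VB, U UB & conflation x y]) /\
      (forall B : X, exists (VB UB : X) (x : Hom B VB) (y : Hom VB UB),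
          [/\ V VB, U UB & conflation x y]).

End Notions.

(* Take a right C-approximation C0 -> B which is a deflation, with cocone
   K -> C0 -> B.  For C' in C, any extension in E(C', K) pushed into E(C', C0)
   vanishes by rigidity, so it comes from a map C' -> B; that map factors
   through C0, where the conflation dies.  Hence K lies in C^perp1.
   For the other conflation, embed B -> I -> C into an injective and pull it
   back along a right C-approximation C0 -> C, obtaining B -> V -> C0.  An
   extension in E(C', V) dies in E(C', C0) by rigidity, so it comes from
   E(C', B); there it dies in E(C', I) = 0, so it is pulled back from C along a
   map C' -> C, which factors through C0, where the pulled-back conflation is
   already trivial.  Hence V lies in C^perp1. *)
From Pilot Require Import Defs.
From mathcomp Require Import all_boot all_algebra.
(* Re-import, so that [Hom] is not MathComp's vector-space [Hom]. *)
Import Defs.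
Set Implicit Arguments.
Unset Strict Implicit.
Import GRing.Theory.
Local Open Scope ring_scope.

Section Extriangulated.

Variable X : CatData.
Hypothesis HX : is_additive X.
Variable D : ExtriData X.
Hypothesis HD : is_extriangulated D.

Lemma cmpA (A B C C' : X) (f : Hom A B) (g : Hom B C) (h : Hom C C') :
  cmp f (cmp g h) = cmp (cmp f g) h.
Proof. by case: HX. Qed.

Lemma cmp1f (A B : X) (f : Hom A B) : cmp (idm A) f = f.
Proof. by case: HX => _ []. Qed.

Lemma cmpf1 (A B : X) (f : Hom A B) : cmp f (idm B) = f.
Proof. by case: HX => _ [_ []]. Qed.

Lemma idm_zobj : idm (@zobj X) = 0.
Proof. by case: HX => _ [_ [_ [_ [_ []]]]]. Qed.

Lemma bi1K (A B : X) : cmp (bi1 A B) (bp1 A B) = idm A.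
Proof. by case: HX => _ [_ [_ [_ [_ [_ /(_ A B) []]]]]]. Qed.

Lemma bi2K (A B : X) : cmp (bi2 A B) (bp2 A B) = idm B.
Proof. by case: HX => _ [_ [_ [_ [_ [_ /(_ A B) []]]]]]. Qed.

Lemma bp_idm (A B : X) :
  cmp (bp1 A B) (bi1 A B) + cmp (bp2 A B) (bi2 A B) = idm (bp A B).
Proof. by case: HX => _ [_ [_ [_ [_ [_ /(_ A B) []]]]]]. Qed.

Lemma pfD (C A A' : X) (a : Hom A A') (d d' : Ext D C A) :
  pf D a (d + d') = pf D a d + pf D a d'.
Proof. by case: HD => [[]]. Qed.

Lemma pf_addm (C A A' : X) (a a' : Hom A A') (d : Ext D C A) :
  pf D (a + a') d = pf D a d + pf D a' d.
Proof. by case: HD => [[_ []]]. Qed.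

Lemma pf1 (C A : X) (d : Ext D C A) : pf D (idm A) d = d.
Proof. by case: HD => [[_ [_ []]]]. Qed.

Lemma pf_cmp (C A A' A'' : X) (a : Hom A A') (a' : Hom A' A'') (d : Ext D C A) :
  pf D (cmp a a') d = pf D a' (pf D a d).
Proof. by case: HD => [[_ [_ [_ []]]]]. Qed.

Lemma pbD (C' C A : X) (c : Hom C' C) (d d' : Ext D C A) :
  pb D c (d + d') = pb D c d + pb D c d'.
Proof. by case: HD => [[_ [_ [_ [_ []]]]]]. Qed.

Lemma pb1 (C A : X) (d : Ext D C A) : pb D (idm C) d = d.
Proof. by case: HD => [[_ [_ [_ [_ [_ [_ []]]]]]]]. Qed.

Lemma pb_cmp (C'' C' C A : X) (c' : Hom C'' C') (c : Hom C' C) (d : Ext D C A) :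
  pb D (cmp c' c) d = pb D c' (pb D c d).
Proof. by case: HD => [[_ [_ [_ [_ [_ [_ [_ []]]]]]]]]. Qed.

Lemma pf_pb (C' C A A' : X) (c : Hom C' C) (a : Hom A A') (d : Ext D C A) :
  pf D a (pb D c d) = pb D c (pf D a d).
Proof. by case: HD => [[_ [_ [_ [_ [_ [_ [_ [_ ->]]]]]]]]]. Qed.

Lemma real_exists (A C : X) (d : Ext D C A) :
  exists (B : X) (x : Hom A B) (y : Hom B C), real D d x y.
Proof. by case: HD => _ [rex _ _] _ _ _; apply: rex. Qed.

Lemma real_iso (A B B' C : X) (d : Ext D C A) (x : Hom A B) (y : Hom B C)
    (x' : Hom A B') (y' : Hom B' C) :
  real D d x y -> real D d x' y' ->
  exists b : Hom B B', [/\ is_iso b, cmp x b = x' & cmp b y' = y].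
Proof.
by move=> rd; case: HD => _ [_ req _] _ _ _ => /(req _ _ _ _ _ _ _ _ _ rd).
Qed.

Lemma real_morphism (A B C A' B' C' : X) (d : Ext D C A) (d' : Ext D C' A')
    (x : Hom A B) (y : Hom B C) (x' : Hom A' B') (y' : Hom B' C')
    (a : Hom A A') (c : Hom C C') :
  real D d x y -> real D d' x' y' -> pf D a d = pb D c d' ->
  exists b : Hom B B', cmp x b = cmp a x' /\ cmp b y' = cmp y c.
Proof. by case: HD => _ [_ _ rmor] _ _ _; apply: rmor. Qed.

Lemma real_split (A C : X) : real D (0 : Ext D C A) (bi1 A C) (bp2 A C).
Proof. by case: HD => _ _ []. Qed.

Lemma ET3 (A B C A' B' C' : X) (d : Ext D C A) (d' : Ext D C' A')
    (x : Hom A B) (y : Hom B C) (x' : Hom A' B') (y' : Hom B' C')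
    (a : Hom A A') (b : Hom B B') :
  real D d x y -> real D d' x' y' -> cmp x b = cmp a x' ->
  exists c : Hom C C', cmp b y' = cmp y c /\ pf D a d = pb D c d'.
Proof. by case: HD => _ _ _ [et3 _] _; apply: et3. Qed.

Lemma ET3op (A B C A' B' C' : X) (d : Ext D C A) (d' : Ext D C' A')
    (x : Hom A B) (y : Hom B C) (x' : Hom A' B') (y' : Hom B' C')
    (b : Hom B B') (c : Hom C C') :
  real D d x y -> real D d' x' y' -> cmp b y' = cmp y c ->
  exists a : Hom A A', cmp x b = cmp a x' /\ pf D a d = pb D c d'.
Proof. by case: HD => _ _ _ [_ et3op] _; apply: et3op. Qed.

Lemma ET4 (A B D0 C F : X) (f : Hom A B) (f' : Hom B D0) (g : Hom B C)
    (g' : Hom C F) (d : Ext D D0 A) (d' : Ext D F B) :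
  real D d f f' -> real D d' g g' ->
  exists (E : X) (h' : Hom C E) (dd : Hom D0 E) (e : Hom E F)
         (d'' : Ext D E A),
    real D d'' (cmp f g) h' /\ cmp f' dd = cmp g h' /\ cmp h' e = g' /\
    real D (pf D f' d') dd e /\ pb D dd d'' = d /\ pf D f d'' = pb D e d'.
Proof. by case: HD => _ _ _ _ [et4 _]; apply: et4. Qed.

Lemma pf0 (C A A' : X) (a : Hom A A') : pf D a (0 : Ext D C A) = 0.
Proof. by apply: (@addrI _ (pf D a 0)); rewrite addr0 -pfD addr0. Qed.

Lemma pf_map0 (C A A' : X) (d : Ext D C A) : pf D (0 : Hom A A') d = 0.
Proof. by apply: (@addrI _ (pf D 0 d)); rewrite addr0 -pf_addm addr0. Qed.

Lemma pb0 (C' C A : X) (c : Hom C' C) : pb D c (0 : Ext D C A) = 0.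
Proof. by apply: (@addrI _ (pb D c 0)); rewrite addr0 -pbD addr0. Qed.

Lemma real0_section (A B C : X) (x : Hom A B) (y : Hom B C) :
  real D (0 : Ext D C A) x y -> exists s : Hom C B, cmp s y = idm C.
Proof.
move=> r0; have [b [_ _ hb]] := real_iso (real_split A C) r0.
by exists (cmp (bi2 A C) b); rewrite -cmpA hb bi2K.
Qed.

Lemma real_pb0 (A B C : X) (d : Ext D C A) (x : Hom A B) (y : Hom B C) :
  real D d x y -> pb D y d = 0.
Proof.
move=> rd.
have [a [_ <-]] := ET3op (real_split A B) rd (erefl (cmp (bp2 A B) y)).
exact: pf0.
Qed.

Lemma real_pf0 (A B C : X) (d : Ext D C A) (x : Hom A B) (y : Hom B C) :
  real D d x y -> pf D x d = 0.
Proof.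
move=> rd.
have [c [_ ->]] := ET3 rd (real_split B C) (erefl (cmp x (bi1 B C))).
exact: pb0.
Qed.

Lemma real_pf_exact (A B C C' : X) (d : Ext D C A) (x : Hom A B) (y : Hom B C)
    (th : Ext D C' A) :
  real D d x y -> pf D x th = 0 -> exists c : Hom C' C, pb D c d = th.
Proof.
move=> rd xth0; have [M [f [g rth]]] := real_exists th.
have [b [fb _]] : exists b : Hom M (bp B C'),
    cmp f b = cmp x (bi1 B C') /\ cmp b (bp2 B C') = cmp g (idm C').
  by apply: (real_morphism rth (real_split B C')); rewrite pb1.
have fbx : cmp f (cmp b (bp1 B C')) = cmp (idm A) x.
  by rewrite cmpA fb -cmpA bi1K cmpf1 cmp1f.
have [c [_ hc]] := ET3 rth rd fbx.
by exists c; rewrite -hc pf1.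
Qed.

Lemma real_pf_exact_mid (A B C C' : X) (d : Ext D C A) (x : Hom A B)
    (y : Hom B C) (th : Ext D C' B) :
  real D d x y -> pf D y th = 0 -> exists eta : Ext D C' A, pf D x eta = th.
Proof.
move=> rd yth0; have [M [f [g rth]]] := real_exists th.
have [E [_ [dd [e [d'' [_ [_ [_ [rdd [_ xd'']]]]]]]]]] := ET4 rd rth.
rewrite yth0 in rdd; have [s se] := real0_section rdd.
by exists (pb D s d''); rewrite pf_pb xd'' -pb_cmp se pb1.
Qed.

Lemma injective_Ext0 (I C : X) (d : Ext D C I) : injective_obj D I -> d = 0.
Proof.
move=> injI; have [M [x [y rd]]] := real_exists d.
have [b xb] := injI _ _ _ x y (ex_intro _ d rd) (idm I).
by rewrite -(pf1 d) -xb pf_cmp (real_pf0 rd) pf0.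
Qed.

Section Perp.

Variable P : X -> Prop.

Lemma perp1_retract (A M : X) (s : Hom A M) (r : Hom M A) :
  cmp s r = idm A -> perp1 D P M -> perp1 D P A.
Proof.
by move=> sr hM C PC d; rewrite -(pf1 d) -sr pf_cmp (hM C PC (pf D s d)) pf0.
Qed.

Lemma perp1_iso (A B : X) : isomorphic A B -> perp1 D P A -> perp1 D P B.
Proof. by move=> [f [g [_ gf]]]; apply: perp1_retract gf. Qed.

Lemma perp1_zobj : perp1 D P zobj.
Proof. by move=> C _ d; rewrite -(pf1 d) idm_zobj pf_map0. Qed.

Lemma perp1_bp (A B : X) : perp1 D P A -> perp1 D P B -> perp1 D P (bp A B).
Proof.
move=> hA hB C PC d.
rewrite -(pf1 d) -bp_idm pf_addm !pf_cmp.
by rewrite (hA C PC (pf D _ d)) (hB C PC (pf D _ d)) !pf0 addr0.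
Qed.

Lemma perp1_subcategory : subcategory (perp1 D P).
Proof. by split; [exact: perp1_zobj | exact: perp1_iso | exact: perp1_bp]. Qed.

Lemma perp1_closed_summands : closed_summands (perp1 D P).
Proof.
move=> M A B hM MAB; apply: perp1_retract (bi1K A B) _.
exact: perp1_iso MAB hM.
Qed.

Hypothesis Prig : rigid D P.

Lemma perp1_cocone_approx (A C0 B : X) (d : Ext D B A) (x : Hom A C0)
    (f : Hom C0 B) :
  P C0 -> (forall (C' : X) (g : Hom C' B), P C' -> exists h, cmp h f = g) ->
  real D d x f -> perp1 D P A.
Proof.
move=> PC0 approx rd C' PC' th.
have [c <-] := real_pf_exact rd (Prig PC' PC0 (pf D x th)).
have [h <-] := approx C' c PC'.
by rewrite pb_cmp (real_pb0 rd) pb0.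
Qed.

Lemma perp1_pullback_approx (B I C C0 V : X) (e : Ext D C B) (i : Hom B I)
    (p : Hom I C) (y : Hom C0 C) (v : Hom B V) (w : Hom V C0) :
  perp1 D P I -> P C0 ->
  (forall (C' : X) (g : Hom C' C), P C' -> exists h, cmp h y = g) ->
  real D e i p -> real D (pb D y e) v w -> perp1 D P V.
Proof.
move=> hI PC0 approx re rv C' PC' th.
have [eta <-] := real_pf_exact_mid rv (Prig PC' PC0 (pf D w th)).
have [c <-] := real_pf_exact re (hI C' PC' (pf D i eta)).
have [h <-] := approx C' c PC'.
by rewrite pb_cmp pf_pb (real_pf0 rv) pb0.
Qed.

End Perp.

End Extriangulated.

Theorem mainTheorem4 (X : CatData) (HX : is_additive X)
  (D : ExtriData X) (HD : is_extriangulated D)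
  (Hinj : enough_injectives D)
  (P : X -> Prop) (HP : subcategory P)
  (Hrig : rigid D P) (Hsum : closed_summands P)
  (Hfin : fully_contravariantly_finite D P) :
  cotorsion_pair D P (perp1 D P).
Proof.
split; first exact: HP.
split; first exact: perp1_subcategory.
split; first exact: Hsum.
split; first exact: perp1_closed_summands.
split; first by move=> A B PA hB; apply: hB.
split.
  move=> B; have [C0 [f [PC0 [A [x [d rd]]] approx]]] := Hfin B.
  exists A, C0, x, f; split=> //; last by exists d.
  exact: perp1_cocone_approx rd.
move=> B; have [I [C [i [p [[e re] injI]]]]] := Hinj B.
have [C0 [y [PC0 _ approx]]] := Hfin C.
have [V [v [w rv]]] := real_exists HD (pb D y e).
exists V, C0, v, w; split=> //; last by exists (pb D y e).
have hI : perp1 D P I by move=> C' _ d; exact: injective_Ext0.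
exact: perp1_pullback_approx hI PC0 approx re rv.
Qed.
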